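(* Consider $\Gamma_T(p,q)$ and its dual games. Let $x^*$ be the realization plan of a security strategy of player 1 in $\Gamma_T(p,q)$ and $\nu^{*l}=-u_{l,0}(x^* )$ for $l\in L$. Then player 1's security strategy $\tilde\sigma^*$ in the type-2 dual game $\tilde\Gamma^2_T(p,\nu^* )$, which at stage $t$ depends only on $(t,p_t,\nu_t)$, is also a security strategy of player 1 in $\Gamma_T(p,q)$. Similarly, let $y^*$ be the realization plan of a security strategy of player 2 in $\Gamma_T(p,q)$ and $\mu^{*k}=-w_{k,0}(y^* )$ for $k\in K$; then player 2's security strategy $\tilde\tau^*$ in $\tilde\Gamma^1_T(\mu^*,q)$, which at stage $t$ depends only on $(t,\mu_t,q_t)$, is also a security strategy of player 2 in $\Gamma_T(p,q)$.
   Context: Setting: nonempty finite type sets $K,L$, action sets $A,B$, payoff $M:K\times L\times A\times B\to\mathbb R$ ($M^{kl}_{a,b}=M(k,l,a,b)$), $p\in\Delta(K),q\in\Delta(L)$ with positive entries. In $\Gamma_T(p,q)$, $k\sim p$, $l\sim q$ drawn independently, told privately to players 1, 2; $T$ stages of simultaneous, publicly announced actions; behavior strategies depend on own type and both histories; payoff $\mathbb E[\sum_{t=1}^TM(k,l,a_t,b_t)]$ to player 1 (maximizer); security strategies attain $\max_\sigma\min_\tau$ resp. $\min_\tau\max_\sigma$ of the payoff. Realization plan of $\sigma$: $x^{a_t}_{k,h_t^A,h_t^B}=p^k\prod_{s=1}^t\sigma_s^{a_s}(k,h_s^A,h_s^B)$; $u_{l,0}(x)=\min_{\tau(l)}\sum_kp^k\mathbb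 E_{\sigma,\tau(l)}[\sum_{s=1}^TM\mid k,l]$; for a realization plan $y$ of $\tau$, $w_{k,0}(y)=\max_{\sigma(k)}\sum_lq^l\mathbb E_{\sigma(k),\tau}[\sum_{s=1}^TM\mid k,l]$. Dual games: $\tilde\Gamma^1_T(\mu,q)$: player 1 chooses $k$ himself, $l\sim q$ by nature, payoff $\mathbb E[\mu^k+\sum_{t=1}^TM]$; $\tilde\Gamma^2_T(p,\nu)$: $k\sim p$ by nature, player 2 chooses $l$ himself, payoff $\mathbb E[\nu^l+\sum_{t=1}^TM]$. Statistics: in $\tilde\Gamma^2_T(p,\nu)$, with $r_t^k=\sigma_t(k,h_t^A,h_t^B)$, $p_1=p$, $\nu_1=\nu$, $p^k_{t+1}=p_t^kr_t^k(a_t)/\sum_{k'}p_t^{k'}r_t^{k'}(a_t)$, $\nu^l_{t+1}=\nu^l_t+\sum_kp^k_{t+1}M^{kl}_{a_t,b_t}$; in $\tilde\Gamma^1_T(\mu,q)$, with $z_t^l=\tau_t(l,h_t^A,h_t^B)$, $q_1=q$, $\mu_1=\mu$, $q^l_{t+1}=q^l_tz^l_t(b_t)/\sum_{l'}q_t^{l'}z_t^{l'}(b_t)$, $\mu^k_{t+1}=\mu^k_t+\sum_lq^l_{t+1}M^{kl}_{a_t,b_t}$. *)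

From HB Require Import structures.
From mathcomp Require Import all_boot all_order all_algebra.
From mathcomp Require Import classical_sets reals.

Set Implicit Arguments.
Unset Strict Implicit.
Unset Printing Implicit Defensive.

Import Order.TTheory GRing.Theory Num.Theory.
Local Open Scope ring_scope.

(* Repeated game with incomplete information on both sides, Gamma_T(p,q),
   and its dual games.
   - Types k : K (player 1), l : L (player 2); actions a : A, b : B.
   - A history at stage t (1-based) is the pair (h^A_t, h^B_t) of the past
     action sequences, of length t-1, in chronological order.
   - A single-type behaviour strategy of player 1 is a map
     h^A -> h^B -> (A -> R) (a mixed action); a behaviour strategy of player 1
     is such a map for every type k. *)

Section Games.
Variable R : realType.
Variables K L A B : finType.
Variable M : K -> L -> A -> B -> R.

Definition mixed (X : finType) (f : X -> R) :=
  (forall x, 0 <= f x) /\ \sum_x f x = 1.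

Definition valid_s1 (s : seq A -> seq B -> A -> R) :=
  forall ha hb, mixed (s ha hb).
Definition valid_s2 (z : seq A -> seq B -> B -> R) :=
  forall ha hb, mixed (z ha hb).

Definition valid1 (sigma : K -> seq A -> seq B -> A -> R) :=
  forall k, valid_s1 (sigma k).
Definition valid2 (tau : L -> seq A -> seq B -> B -> R) :=
  forall l, valid_s2 (tau l).

(* expected value of the sum of the stage payoffs m over the [n] remaining
   stages, from history (ha, hb), when player 1 plays s and player 2 plays z
   (simultaneous independent moves, publicly announced). *)
Fixpoint pay (n : nat) (s : seq A -> seq B -> A -> R)
    (z : seq A -> seq B -> B -> R) (m : A -> B -> R)
    (ha : seq A) (hb : seq B) : R :=
  match n with
  | 0 => 0
  | n'.+1 => \sum_a \sum_b s ha hb a * z ha hb b *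
               (m a b + pay n' s z m (rcons ha a) (rcons hb b))
  end.

Definition cond_pay (T : nat) sigma tau (k : K) (l : L) : R :=
  pay T (sigma k) (tau l) (M k l) [::] [::].

Definition payoff (T : nat) (p : K -> R) (q : L -> R) sigma tau : R :=
  \sum_k \sum_l p k * q l * cond_pay T sigma tau k l.

(* security strategies of Gamma_T(p,q): sigma attains
   max_sigma inf_tau payoff, i.e. every level guaranteed by some strategy is
   guaranteed by sigma; dually for player 2. *)
Definition security1 (T : nat) (p : K -> R) (q : L -> R) sigma :=
  valid1 sigma /\
  forall sigma' v, valid1 sigma' ->
    (forall tau, valid2 tau -> v <= payoff T p q sigma' tau) ->
    (forall tau, valid2 tau -> v <= payoff T p q sigma tau).

Definition security2 (T : nat) (p : K -> R) (q : L -> R) tau :=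
  valid2 tau /\
  forall tau' v, valid2 tau' ->
    (forall sigma, valid1 sigma -> payoff T p q sigma tau' <= v) ->
    (forall sigma, valid1 sigma -> payoff T p q sigma tau <= v).

(* u_{l,0}(x) = min_{tau(l)} sum_k p^k E_{sigma,tau(l)}[sum_t M | k,l],
   where x is the realization plan of sigma *)
Definition u0 (T : nat) (p : K -> R) sigma (l : L) : R :=
  inf [set v | exists tau, valid2 tau /\ v = \sum_k p k * cond_pay T sigma tau k l].

(* w_{k,0}(y) = max_{sigma(k)} sum_l q^l E_{sigma(k),tau}[sum_t M | k,l],
   where y is the realization plan of tau *)
Definition w0 (T : nat) (q : L -> R) tau (k : K) : R :=
  sup [set v | exists sigma, valid1 sigma /\ v = \sum_l q l * cond_pay T sigma tau k l].

(* Dual game ~Gamma^2_T(p,nu): k ~ p by nature, player 2 chooses l himself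
   (possibly at random, with distribution pi), payoff E[nu^l + sum_t M]. *)
Definition dual2_payoff (T : nat) (p : K -> R) (nu : L -> R) sigma
    (pi : L -> R) tau : R :=
  \sum_l pi l * (nu l + \sum_k p k * cond_pay T sigma tau k l).

Definition dual2_security1 (T : nat) (p : K -> R) (nu : L -> R) sigma :=
  valid1 sigma /\
  forall sigma' v, valid1 sigma' ->
    (forall pi tau, mixed pi -> valid2 tau -> v <= dual2_payoff T p nu sigma' pi tau) ->
    (forall pi tau, mixed pi -> valid2 tau -> v <= dual2_payoff T p nu sigma pi tau).

(* Dual game ~Gamma^1_T(mu,q): player 1 chooses k himself (distribution pi),
   l ~ q by nature, payoff E[mu^k + sum_t M]. *)
Definition dual1_payoff (T : nat) (mu : K -> R) (q : L -> R) (pi : K -> R)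
    sigma tau : R :=
  \sum_k pi k * (mu k + \sum_l q l * cond_pay T sigma tau k l).

Definition dual1_security2 (T : nat) (mu : K -> R) (q : L -> R) tau :=
  valid2 tau /\
  forall tau' v, valid2 tau' ->
    (forall pi sigma, mixed pi -> valid1 sigma -> dual1_payoff T mu q pi sigma tau' <= v) ->
    (forall pi sigma, mixed pi -> valid1 sigma -> dual1_payoff T mu q pi sigma tau <= v).

(* Statistics (p_t, nu_t) of ~Gamma^2_T(p,nu) along a history, processed in
   chronological order; [pre_a, pre_b] is the already processed prefix.
   Returns None when the history has probability 0 (Bayes' rule undefined). *)
Fixpoint stats1_aux (sigma : K -> seq A -> seq B -> A -> R)
    (pre_a : seq A) (pre_b : seq B) (pt : K -> R) (nt : L -> R)
    (h : seq (A * B)) : option ((K -> R) * (L -> R)) :=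
  match h with
  | [::] => Some (pt, nt)
  | (a, b) :: h' =>
      let den := \sum_k pt k * sigma k pre_a pre_b a in
      if 0 < den then
        let p' := fun k => pt k * sigma k pre_a pre_b a / den in
        stats1_aux sigma (rcons pre_a a) (rcons pre_b b) p'
          (fun l => nt l + \sum_k p' k * M k l a b) h'
      else None
  end.

Definition stats1 sigma (p : K -> R) (nu : L -> R) (ha : seq A) (hb : seq B) :=
  stats1_aux sigma [::] [::] p nu (zip ha hb).

Fixpoint stats2_aux (tau : L -> seq A -> seq B -> B -> R)
    (pre_a : seq A) (pre_b : seq B) (mt : K -> R) (qt : L -> R)
    (h : seq (A * B)) : option ((K -> R) * (L -> R)) :=
  match h with
  | [::] => Some (mt, qt)
  | (a, b) :: h' =>
      let den := \sum_l qt l * tau l pre_a pre_b b in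
      if 0 < den then
        let q' := fun l => qt l * tau l pre_a pre_b b / den in
        stats2_aux tau (rcons pre_a a) (rcons pre_b b)
          (fun k => mt k + \sum_l q' l * M k l a b) q' h'
      else None
  end.

Definition stats2 tau (mu : K -> R) (q : L -> R) (ha : seq A) (hb : seq B) :=
  stats2_aux tau [::] [::] mu q (zip ha hb).

(* sigma, at every stage t <= T (history length t-1 < T) reached with
   positive probability, depends only on (t, p_t, nu_t) (and own type k). *)
Definition stationary1 (T : nat) (p : K -> R) (nu : L -> R) sigma :=
  exists F : nat -> (K -> R) -> (L -> R) -> K -> A -> R,
    forall ha hb pt nt, size ha = size hb -> (size ha < T)%N ->
      stats1 sigma p nu ha hb = Some (pt, nt) ->
      forall k a, sigma k ha hb a = F (size ha) pt nt k a.

Definition stationary2 (T : nat) (mu : K -> R) (q : L -> R) tau :=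
  exists G : nat -> (K -> R) -> (L -> R) -> L -> B -> R,
    forall ha hb mt qt, size ha = size hb -> (size ha < T)%N ->
      stats2 tau mu q ha hb = Some (mt, qt) ->
      forall l b, tau l ha hb b = G (size ha) mt qt l b.

End Games.

(* By
   the definition of u_{l,0}, the strategy sigma* guarantees 0 in the dual
   game ~Gamma^2_T with parameters p and nu*, so every security strategy
   sigma~ of that game guarantees 0 too.  Letting player 2 choose a pure type
   l shows that sum_k p^k E_{sigma~,tau}[sum_t M | k, l] >= u_{l,0}[x*] for
   every l and tau, hence sigma~ guarantees sum_l q^l u_{l,0}[x*] in
   Gamma_T(p, q).  Since player 2 can best-reply separately for each of his
   types, this is exactly the level guaranteed by sigma*, so sigma~ is a
   security strategy. *)

From HB Require Import structures.
From mathcomp Require Import all_boot all_order all_algebra.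
From mathcomp Require Import boolp classical_sets reals.

Set Implicit Arguments.
Unset Strict Implicit.
Unset Printing Implicit Defensive.

Import Order.TTheory GRing.Theory Num.Theory.
Local Open Scope ring_scope.

Section RealFacts.
Variable R : realType.

Lemma norm_convex_sum2_le (I J : finType) (w x : I -> J -> R) c :
  (forall i j, 0 <= w i j) -> \sum_i \sum_j w i j = 1 ->
  (forall i j, `|x i j| <= c) -> `|\sum_i \sum_j w i j * x i j| <= c.
Proof.
move=> w_ge0 w_sum1 x_le.
apply: le_trans (ler_norm_sum _ _ _) _.
apply: (@le_trans _ _ (\sum_i \sum_j w i j * c)).
  apply: ler_sum => i _; apply: le_trans (ler_norm_sum _ _ _) _.
  by apply: ler_sum => j _; rewrite normrM ger0_norm // ler_wpM2l.
under eq_bigr do rewrite -mulr_suml.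
by rewrite -mulr_suml w_sum1 mul1r.
Qed.

Lemma norm_sum_mul_le (I : finType) (w x : I -> R) c :
  (forall i, `|x i| <= c) -> `|\sum_i w i * x i| <= (\sum_i `|w i|) * c.
Proof.
move=> x_le; apply: le_trans (ler_norm_sum _ _ _) _.
by rewrite mulr_suml; apply: ler_sum => i _; rewrite normrM ler_wpM2l.
Qed.

Lemma mixed_uniform (X : finType) :
  (0 < #|X|)%N -> mixed (fun _ : X => #|X|%:R^-1 : R).
Proof.
move=> X_gt0; split=> [_|]; first by rewrite invr_ge0 ler0n.
by rewrite sumr_const -(mulr_natr (#|X|%:R^-1)) mulVf // pnatr_eq0 -lt0n.
Qed.

Lemma mixed_delta (X : finType) (x : X) : mixed (fun y => (y == x)%:R : R).
Proof.
split=> [y|]; first by rewrite ler0n.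
by rewrite (bigD1 x) //= eqxx big1 ?addr0 // => y /negbTE ->.
Qed.

Lemma sum_delta_mul (X : finType) (x : X) (f : X -> R) :
  \sum_y (y == x)%:R * f y = f x.
Proof.
by rewrite (bigD1 x) //= eqxx mul1r big1 ?addr0 // => y /negbTE ->; rewrite mul0r.
Qed.

Lemma mixed_sum_ge0P (X : finType) (f : X -> R) :
  (forall pi, mixed pi -> 0 <= \sum_x pi x * f x) <-> (forall x, 0 <= f x).
Proof.
split=> [f_avg x | f_ge0 pi [pi_ge0 _]].
  by have := f_avg _ (mixed_delta x); rewrite sum_delta_mul.
by apply: sumr_ge0 => x _; rewrite mulr_ge0.
Qed.

Lemma mixed_sum_le0P (X : finType) (f : X -> R) :
  (forall pi, mixed pi -> \sum_x pi x * f x <= 0) <-> (forall x, f x <= 0).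
Proof.
split=> [f_avg x | f_le0 pi [pi_ge0 _]].
  by have := f_avg _ (mixed_delta x); rewrite sum_delta_mul.
by apply: sumr_le0 => x _; rewrite mulr_ge0_le0.
Qed.

Section SeparableExtrema.
Variables (I : finType) (X : Type) (P : X -> Prop) (F : I -> X -> R).
Variable w : I -> R.
Hypotheses (w_ge0 : forall i, 0 <= w i) (w_sum1 : \sum_i w i = 1).

Lemma le_sum_inf v :
  (forall i, has_inf [set y | exists x, P x /\ y = F i x]) ->
  (forall g : I -> X, (forall i, P (g i)) -> v <= \sum_i w i * F i (g i)) ->
  v <= \sum_i w i * inf [set y | exists x, P x /\ y = F i x].
Proof.
move=> has_infF v_le; apply/ler_addgt0Pr => e e_gt0.
have /choice[g g_near] : forall i, exists x,
    P x /\ F i x < inf [set y | exists x, P x /\ y = F i x] + e.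
  move=> i; have [_ [x [Px ->]] lt_e] := inf_adherent e_gt0 (has_infF i).
  by exists x.
apply: le_trans (v_le g (fun i => (g_near i).1)) _.
rewrite -[e]mul1r -w_sum1 mulr_suml -big_split /=.
by apply: ler_sum => i _; rewrite -mulrDr ler_wpM2l // ltW // (g_near i).2.
Qed.

Lemma ge_sum_sup v :
  (forall i, has_sup [set y | exists x, P x /\ y = F i x]) ->
  (forall g : I -> X, (forall i, P (g i)) -> \sum_i w i * F i (g i) <= v) ->
  \sum_i w i * sup [set y | exists x, P x /\ y = F i x] <= v.
Proof.
move=> has_supF le_v; apply/ler_addgt0Pr => e e_gt0; rewrite -lerBlDr.
have /choice[g g_near] : forall i, exists x,
    P x /\ sup [set y | exists x, P x /\ y = F i x] - e < F i x.
  move=> i; have [_ [x [Px ->]] lt_e] := sup_adherent e_gt0 (has_supF i).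
  by exists x.
apply: le_trans _ (le_v g (fun i => (g_near i).1)).
rewrite -[e]mul1r -w_sum1 mulr_suml -sumrB.
by apply: ler_sum => i _; rewrite -mulrBr ler_wpM2l // ltW // (g_near i).2.
Qed.

End SeparableExtrema.
End RealFacts.

Section DualGames.
Variables (R : realType) (K L A B : finType) (M : K -> L -> A -> B -> R).
Variables (T : nat) (p : K -> R) (q : L -> R).
Hypotheses (A_gt0 : (0 < #|A|)%N) (B_gt0 : (0 < #|B|)%N).
Hypotheses (p_ge0 : forall k, 0 <= p k) (p_sum1 : \sum_k p k = 1).
Hypotheses (q_ge0 : forall l, 0 <= q l) (q_sum1 : \sum_l q l = 1).

Lemma norm_pay_le n s z (m : A -> B -> R) ha hb c :
  valid_s1 s -> valid_s2 z -> (forall a b, `|m a b| <= c) ->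
  `|pay n s z m ha hb| <= n%:R * c.
Proof.
move=> vs vz m_le; elim: n ha hb => [|n IHn] ha hb /=.
  by rewrite normr0 mul0r.
have [s_ge0 s_sum1] := vs ha hb; have [z_ge0 z_sum1] := vz ha hb.
apply: norm_convex_sum2_le => [a b | | a b]; first by rewrite mulr_ge0.
  by under eq_bigr do rewrite -mulr_sumr z_sum1 mulr1.
apply: le_trans (ler_normD _ _) _.
by rewrite -natr1 mulrDl mul1r addrC lerD.
Qed.

Lemma cond_pay_bounded : exists c, forall sigma tau k l,
  valid1 sigma -> valid2 tau -> `|cond_pay M T sigma tau k l| <= c.
Proof.
pose bound := \big[Num.max/0]_(x : K * L * A * B)
  (let: (k, l, a, b) := x in `|M k l a b|).
exists (T%:R * bound) => sigma tau k l vs vt.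
apply: norm_pay_le => // a b.
exact: (le_bigmax _ _ (k, l, a, b)).
Qed.

Lemma exists_valid1 : exists sigma, @valid1 R K A B sigma.
Proof. by exists (fun _ _ _ _ => #|A|%:R^-1) => k ha hb; exact: mixed_uniform. Qed.

Lemma exists_valid2 : exists tau, @valid2 R L A B tau.
Proof. by exists (fun _ _ _ _ => #|B|%:R^-1) => l ha hb; exact: mixed_uniform. Qed.

Lemma has_inf_u0 sigma l : valid1 sigma ->
  has_inf [set v | exists tau,
    valid2 tau /\ v = \sum_k p k * cond_pay M T sigma tau k l].
Proof.
move=> vs; have [c c_bound] := cond_pay_bounded; split.
  have [tau vt] := exists_valid2.
  by exists (\sum_k p k * cond_pay M T sigma tau k l); exists tau.
exists (- ((\sum_k `|p k|) * c)) => _ [tau [vt ->]].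
have := norm_sum_mul_le p (fun k => c_bound sigma tau k l vs vt).
by rewrite ler_norml => /andP[].
Qed.

Lemma has_sup_w0 tau k : valid2 tau ->
  has_sup [set v | exists sigma,
    valid1 sigma /\ v = \sum_l q l * cond_pay M T sigma tau k l].
Proof.
move=> vt; have [c c_bound] := cond_pay_bounded; split.
  have [sigma vs] := exists_valid1.
  by exists (\sum_l q l * cond_pay M T sigma tau k l); exists sigma.
exists ((\sum_l `|q l|) * c) => _ [sigma [vs ->]].
have := norm_sum_mul_le q (fun l => c_bound sigma tau k l vs vt).
by rewrite ler_norml => /andP[].
Qed.

Lemma u0_le sigma tau l : valid1 sigma -> valid2 tau ->
  u0 M T p sigma l <= \sum_k p k * cond_pay M T sigma tau k l.
Proof.
by move=> vs vt; apply: (ge_inf (has_inf_u0 l vs).2); exists tau.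
Qed.

Lemma w0_ge sigma tau k : valid1 sigma -> valid2 tau ->
  \sum_l q l * cond_pay M T sigma tau k l <= w0 M T q tau k.
Proof.
by move=> vs vt; apply: (ub_le_sup (has_sup_w0 k vt).2); exists sigma.
Qed.

Lemma payoffEl sigma tau :
  payoff M T p q sigma tau = \sum_l q l * \sum_k p k * cond_pay M T sigma tau k l.
Proof.
rewrite /payoff exchange_big; apply: eq_bigr => l _; rewrite mulr_sumr.
by apply: eq_bigr => k _; rewrite mulrA (mulrC (q l)).
Qed.

Lemma payoffEk sigma tau :
  payoff M T p q sigma tau = \sum_k p k * \sum_l q l * cond_pay M T sigma tau k l.
Proof.
by apply: eq_bigr => k _; rewrite mulr_sumr; apply: eq_bigr => l _; rewrite mulrA.
Qed.

(* Player 2 best-replies type by type: the strategy [fun l => g l l] glues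
   near-optimal replies [g l] of the individual types. *)
Lemma guarantee1_le_sum_u0 sigma v : valid1 sigma ->
  (forall tau, valid2 tau -> v <= payoff M T p q sigma tau) ->
  v <= \sum_l q l * u0 M T p sigma l.
Proof.
move=> vs v_le.
apply: (le_sum_inf (P := @valid2 R L A B)
  (F := fun l tau => \sum_k p k * cond_pay M T sigma tau k l)) => // [l|g vg].
  exact: has_inf_u0.
by have := v_le _ (fun l => vg l l); rewrite payoffEl.
Qed.

Lemma guarantee2_ge_sum_w0 tau v : valid2 tau ->
  (forall sigma, valid1 sigma -> payoff M T p q sigma tau <= v) ->
  \sum_k p k * w0 M T q tau k <= v.
Proof.
move=> vt le_v.
apply: (ge_sum_sup (P := @valid1 R K A B)
  (F := fun k sigma => \sum_l q l * cond_pay M T sigma tau k l)) => // [k|g vg].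
  exact: has_sup_w0.
by have := le_v _ (fun k => vg k k); rewrite payoffEk.
Qed.

Lemma dual2_payoff_u0_ge0 sigma pi tau :
  valid1 sigma -> mixed pi -> valid2 tau ->
  0 <= dual2_payoff M T p (fun l => - u0 M T p sigma l) sigma pi tau.
Proof.
move=> vs mpi vt; apply: (mixed_sum_ge0P _).2 => // l.
by rewrite addrC subr_ge0 u0_le.
Qed.

Lemma dual1_payoff_w0_le0 tau pi sigma :
  valid2 tau -> mixed pi -> valid1 sigma ->
  dual1_payoff M T (fun k => - w0 M T q tau k) q pi sigma tau <= 0.
Proof.
move=> vt mpi vs; apply: (mixed_sum_le0P _).2 => // k.
by rewrite addrC subr_le0 w0_ge.
Qed.

Lemma dual2_guarantee0_ge nu sigma :
  (forall pi tau, mixed pi -> valid2 tau ->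
     0 <= dual2_payoff M T p nu sigma pi tau) ->
  forall tau l, valid2 tau -> - nu l <= \sum_k p k * cond_pay M T sigma tau k l.
Proof.
move=> ge0 tau l vt.
have /mixed_sum_ge0P/(_ l) := fun pi mpi => ge0 pi tau mpi vt.
by rewrite addrC -lerBlDr sub0r.
Qed.

Lemma dual1_guarantee0_le mu tau :
  (forall pi sigma, mixed pi -> valid1 sigma ->
     dual1_payoff M T mu q pi sigma tau <= 0) ->
  forall sigma k, valid1 sigma -> \sum_l q l * cond_pay M T sigma tau k l <= - mu k.
Proof.
move=> le0 sigma k vs.
have /mixed_sum_le0P/(_ k) := fun pi mpi => le0 pi sigma mpi vs.
by rewrite addrC -lerBrDr sub0r.
Qed.

Lemma dual2_security1_security1 sigma_star sigma :
  security1 M T p q sigma_star ->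
  dual2_security1 M T p (fun l => - u0 M T p sigma_star l) sigma ->
  security1 M T p q sigma.
Proof.
move=> [vss secss] [vs dsec]; split=> // sigma' v vs' v_le tau vt.
have sigma_ge0 := dsec _ 0 vss (fun _ _ => dual2_payoff_u0_ge0 vss).
apply: le_trans (guarantee1_le_sum_u0 vss (secss _ _ vs' v_le)) _.
rewrite payoffEl; apply: ler_sum => l _; rewrite ler_wpM2l //.
by have := dual2_guarantee0_ge sigma_ge0 l vt; rewrite opprK.
Qed.

Lemma dual1_security2_security2 tau_star tau :
  security2 M T p q tau_star ->
  dual1_security2 M T (fun k => - w0 M T q tau_star k) q tau ->
  security2 M T p q tau.
Proof.
move=> [vts sects] [vt dsec]; split=> // tau' v vt' le_v sigma vs.
have tau_le0 := dsec _ 0 vts (fun _ _ => dual1_payoff_w0_le0 vts).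
apply: le_trans _ (guarantee2_ge_sum_w0 vts (sects _ _ vt' le_v)).
rewrite payoffEk; apply: ler_sum => k _; rewrite ler_wpM2l //.
by have := dual1_guarantee0_le tau_le0 k vs; rewrite opprK.
Qed.

End DualGames.

Theorem corollary1 (R : realType) (K L A B : finType)
    (M : K -> L -> A -> B -> R) (T : nat) (p : K -> R) (q : L -> R) :
  (0 < #|A|)%N -> (0 < #|B|)%N ->
  (forall k, 0 < p k) -> \sum_k p k = 1 ->
  (forall l, 0 < q l) -> \sum_l q l = 1 ->
  (forall sigma_star, security1 M T p q sigma_star ->
     let nu_star := fun l => - u0 M T p sigma_star l in
     forall sigma_tilde,
       dual2_security1 M T p nu_star sigma_tilde ->
       stationary1 M T p nu_star sigma_tilde ->
       security1 M T p q sigma_tilde)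
  /\
  (forall tau_star, security2 M T p q tau_star ->
     let mu_star := fun k => - w0 M T q tau_star k in
     forall tau_tilde,
       dual1_security2 M T mu_star q tau_tilde ->
       stationary2 M T mu_star q tau_tilde ->
       security2 M T p q tau_tilde).
Proof.
move=> A_gt0 B_gt0 p_gt0 p_sum1 q_gt0 q_sum1.
have p_ge0 k := ltW (p_gt0 k); have q_ge0 l := ltW (q_gt0 l).
split=> [sigma_star secss nu_star sigma dsec _ | tau_star sects mu_star tau dsec _].
- exact: dual2_security1_security1 secss dsec.
- exact: dual1_security2_security2 sects dsec.
Qed.
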